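(* The length complexity of $\mathsf{C\text{-}RASP}$ (with $\mathsf{C\text{-}RASP}$ programs as representations of languages and program size as descriptional complexity) is not computably bounded; that is, there is no computable function $g:\mathbb{N}\to\mathbb{N}$ with $f(c)\le g(c)$ for all $c$, where $f$ is the length complexity.
   Context: $\mathsf{C\text{-}RASP}$ formulas over a finite alphabet $\Sigma$: $\phi ::= \sigma \mid \Diamond^{-}\phi \mid \Box^{-}\phi \mid \neg\phi \mid \phi_1\wedge\phi_2 \mid \sum_{t\in\mathcal{T}}\alpha_t t\sim k$, terms $t ::= \#[\phi] \mid c$, with $\sigma\in\Sigma$, $\alpha_t,k,c\in\mathbb{Z}$, ${\sim}\in\{<,\le,=,\ge,>\}$. Semantics at position $i$ of $w=w_1\cdots w_n$: $w,i\models\sigma$ iff $w_i=\sigma$; Boolean connectives as usual; $w,i\models\Diamond^{-}\phi$ iff $w,j\models\phi$ for some $j<i$; $w,i\models\Box^{-}\phi$ iff $w,j\models\phi$ for all $j\le i$; $\#[\phi]$ evaluates to $|\{j\in[1,i]: w,j\models\phi\}|$, $c$ to $c$, comparisons are integer comparisons. $w\models\phi$ iff $w,|w|\models\phi$; $L(\phi)=\{w:w\models\phi\}$. Programs are straight-line (DAG) representations $(\phi_1,\dots,\phi_n)$ where $\phi_i$ may refer to $\phi_j$, $j<i$; the size of a program is its total number of symbols, with constants written in binary and each reference to an earlier line counting as size 1. The length complexity is the function $f:\mathbb N\to\mathbb N$ given by $f(c)=\max\{\min\{|w| : w\in L(E)\setminus L(E')\} : E,E' \text{ programs of size}\le c,\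 L(E)\setminus L(E')\neq\emptyset\}$, i.e. the least bound such that any two programs of size at most $c$ defining different languages are distinguished by a string of length at most $f(c)$. *)

From mathcomp Require Import all_boot all_order all_algebra.
Set Implicit Arguments. Unset Strict Implicit. Unset Printing Implicit Defensive.
Import Order.TTheory GRing.Theory Num.Theory.

(* Syntax of C-RASP formulas, extended with references [FRef j] to an *)
(* earlier line j (0-indexed) of a straight-line program.             *)

Inductive cmp := CLt | CLe | CEq | CGe | CGt.

Inductive form (Sigma : Type) :=
| FSym of Sigma
| FDia of form Sigma
| FBox of form Sigma
| FNot of form Sigma
| FAnd of form Sigma & form Sigma
| FCmp of seq (int * term Sigma) & cmp & int
| FRef of nat
with term (Sigma : Type) :=
| TCount of form Sigma
| TConst of int.

Arguments FSym {Sigma}. Arguments FDia {Sigma}. Arguments FBox {Sigma}.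
Arguments FNot {Sigma}. Arguments FAnd {Sigma}. Arguments FCmp {Sigma}.
Arguments FRef {Sigma}. Arguments TCount {Sigma}. Arguments TConst {Sigma}.

Definition cmpb (o : cmp) (a b : int) : bool :=
  match o with
  | CLt => (a < b)%R | CLe => (a <= b)%R | CEq => a == b
  | CGe => (a >= b)%R | CGt => (a > b)%R
  end.

(* Semantics at position i (1-indexed) of w; [env j p] is the truth value
   of the earlier program line j at position p. *)
Fixpoint eval (Sigma : eqType) (env : nat -> nat -> bool) (w : seq Sigma)
    (phi : form Sigma) (i : nat) {struct phi} : bool :=
  match phi with
  | FSym s => (0 < i) && (nth None (map Some w) i.-1 == Some s)
  | FDia p => has (fun j => eval env w p j) (iota 1 i.-1)
  | FBox p => all (fun j => eval env w p j) (iota 1 i)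
  | FNot p => ~~ eval env w p i
  | FAnd p q => eval env w p i && eval env w q i
  | FCmp ts o k =>
      cmpb o ((fix sumt (ts : seq (int * term Sigma)) : int :=
                 match ts with
                 | [::] => 0%R
                 | (a, t) :: ts' => (a * eval_term env w t i + sumt ts')%R
                 end) ts) k
  | FRef j => env j i
  end
with eval_term (Sigma : eqType) (env : nat -> nat -> bool) (w : seq Sigma)
    (t : term Sigma) (i : nat) {struct t} : int :=
  match t with
  | TCount p => (count (fun j => eval env w p j) (iota 1 i))%:Z
  | TConst c => c
  end.

Fixpoint refs_ok (Sigma : Type) (n : nat) (phi : form Sigma) {struct phi} : bool :=
  match phi with
  | FSym _ => true
  | FDia p | FBox p | FNot p => refs_ok n p
  | FAnd p q => refs_ok n p && refs_ok n q
  | FCmp ts _ _ =>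
      (fix allt (ts : seq (int * term Sigma)) : bool :=
         match ts with
         | [::] => true
         | (_, t) :: ts' => refs_ok_term n t && allt ts'
         end) ts
  | FRef j => j < n
  end
with refs_ok_term (Sigma : Type) (n : nat) (t : term Sigma) {struct t} : bool :=
  match t with
  | TCount p => refs_ok n p
  | TConst _ => true
  end.

(* Size: constants in binary (bits of |z| plus a sign symbol),        *)
(* each symbol 1, each reference 1.                                   *)

Definition int_size (z : int) : nat := (trunc_log 2 `|z|%N).+2.

Fixpoint fsize (Sigma : Type) (phi : form Sigma) {struct phi} : nat :=
  match phi with
  | FSym _ => 1
  | FDia p | FBox p | FNot p => (fsize p).+1
  | FAnd p q => (fsize p + fsize q).+1
  | FCmp ts _ k =>
      (fix sizet (ts : seq (int * term Sigma)) : nat :=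
         match ts with
         | [::] => 0
         | (a, t) :: ts' => int_size a + tsize t + 1 + sizet ts'
         end) ts + 1 + int_size k
  | FRef _ => 1
  end
with tsize (Sigma : Type) (t : term Sigma) {struct t} : nat :=
  match t with
  | TCount p => (fsize p).+1
  | TConst c => int_size c
  end.

(* the program defines the language of its last line.                 *)

Definition program (Sigma : Type) := seq (form Sigma).

Definition dflt_form (Sigma : Type) : form Sigma := FCmp [::] CLe 0%R.

Definition wf_prog (Sigma : Type) (ps : program Sigma) : bool :=
  (0 < size ps) &&
  all (fun k => refs_ok k (nth (dflt_form Sigma) ps k)) (iota 0 (size ps)).

Definition prog_size (Sigma : Type) (ps : program Sigma) : nat :=
  sumn (map (@fsize Sigma) ps).

Fixpoint penv (Sigma : eqType) (ps : program Sigma) (w : seq Sigma) (n : nat)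
    : nat -> nat -> bool :=
  match n with
  | 0 => fun _ _ => false
  | n'.+1 =>
      let e := penv ps w n' in
      fun j p => if j == n' then eval e w (nth (dflt_form Sigma) ps n') p
                 else e j p
  end.

Definition accepts (Sigma : eqType) (ps : program Sigma) (w : seq Sigma) : bool :=
  eval (penv ps w (size ps).-1) w (nth (dflt_form Sigma) ps (size ps).-1) (size w).

(* g bounds the length complexity f, i.e. f(c) <= g(c) for all c:
   whenever two programs of size <= c satisfy L(E) \ L(E') <> empty,
   some string of length <= g c lies in L(E) \ L(E'). *)
Definition length_complexity_bounded_by (Sigma : eqType) (g : nat -> nat) : Prop :=
  forall (c : nat) (E E' : program Sigma),
    wf_prog E -> wf_prog E' -> prog_size E <= c -> prog_size E' <= c ->
    (exists w : seq Sigma, accepts E w && ~~ accepts E' w) ->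
    exists w : seq Sigma, size w <= g c /\ accepts E w && ~~ accepts E' w.

Inductive prf :=
| PZero
| PSucc
| PProj of nat
| PComp of prf & seq prf
| PRec of prf & prf
| PMin of prf.

Inductive prf_eval : prf -> seq nat -> nat -> Prop :=
| ev_zero args : prf_eval PZero args 0
| ev_succ x args : prf_eval PSucc (x :: args) x.+1
| ev_proj i args : i < size args -> prf_eval (PProj i) args (nth 0 args i)
| ev_comp f gs args ys y :
    prf_evals gs args ys -> prf_eval f ys y -> prf_eval (PComp f gs) args y
| ev_rec0 f g args y : prf_eval f args y -> prf_eval (PRec f g) (0 :: args) y
| ev_recS f g n args r y :
    prf_eval (PRec f g) (n :: args) r -> prf_eval g (n :: r :: args) y ->
    prf_eval (PRec f g) (n.+1 :: args) y
| ev_min f args n :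
    prf_eval f (n :: args) 0 ->
    (forall m, m < n -> exists v, prf_eval f (m :: args) v.+1) ->
    prf_eval (PMin f) args n
with prf_evals : seq prf -> seq nat -> seq nat -> Prop :=
| evs_nil args : prf_evals [::] args [::]
| evs_cons g gs args y ys :
    prf_eval g args y -> prf_evals gs args ys -> prf_evals (g :: gs) args (y :: ys).

Definition computable (g : nat -> nat) : Prop :=
  exists p : prf, forall n, prf_eval p [:: n] (g n).

(* If a computable [g] bounded the length complexity, take a partial recursive
   definition of [g] and compile it into a register machine [M] which, started
   with [c] in register 0, halts with [g c + 1] in register 1.  A C-RASP formula
   recognises the words that encode halting runs of [M]: the number of [Up]
   minus [Down] letters read so far is the current address, each instruction
   letter fires one transition, and register contents are linear combinations
   of transition counts.  The input [c] occurs in the formula only as a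
   constant, so its size is O(log c); and since register 1 grows by at most one
   per letter, every accepted word is longer than [g c].  For large [c] this
   formula and the formula of the empty language both have size at most [c],
   yet no word of length at most [g c] separates them. *)

From Pilot Require Import Defs.
From HB Require Import structures.
From mathcomp Require Import all_boot all_order all_algebra.
From mathcomp Require Import zify.
From Stdlib Require Import FunctionalExtensionality.
Set Implicit Arguments. Unset Strict Implicit. Unset Printing Implicit Defensive.
Import GRing.Theory.

Definition upd (s : nat -> nat) (x v : nat) : nat -> nat :=
  fun y => if y == x then v else s y.

Lemma updE s x v y : upd s x v y = if y == x then v else s y.
Proof. by []. Qed.

Lemma upd_same s x v : upd s x v x = v.
Proof. by rewrite updE eqxx. Qed.

Lemma upd_upd s x a b : upd (upd s x a) x b = upd s x b.
Proof. by apply: functional_extensionality => y; rewrite !updE; case: eqP. Qed.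

Lemma upd_id s x : upd s x (s x) = s.
Proof. by apply: functional_extensionality => y; rewrite updE; case: eqP => [->|]. Qed.

Ltac simpl_upd :=
  rewrite ?updE; repeat (let E := fresh "E" in case: eqP => /= E; try rewrite E); try lia.

Ltac upd_ext := let z := fresh "z" in
  apply: functional_extensionality => z; rewrite ?updE;
  repeat (case: eqP => /= ?; subst); try lia.

(** * Register machines *)

Inductive instr := Inc of nat | DecJz of nat & nat | Jmp of nat.

Definition config := (nat * (nat -> nat))%type.

(* Jump targets are clamped to [size M], so a machine halts exactly at [pc = size M]. *)
Definition rm_step (M : seq instr) (c : config) : option config :=
  let: (pc, s) := c in
  if pc < size M then
    match nth (Jmp 0) M pc with
    | Inc r => Some (pc.+1, upd s r (s r).+1)
    | DecJz r t => if s r == 0 then Some (minn t (size M), s)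
                   else Some (pc.+1, upd s r (s r).-1)
    | Jmp t => Some (minn t (size M), s)
    end
  else None.

Inductive rm_reach (M : seq instr) : config -> config -> Prop :=
| rm_reach_refl c : rm_reach M c c
| rm_reach_step c c1 c2 : rm_step M c = Some c1 -> rm_reach M c1 c2 -> rm_reach M c c2.

Lemma rm_reach_trans M c1 c2 c3 : rm_reach M c1 c2 -> rm_reach M c2 c3 -> rm_reach M c1 c3.
Proof. by elim=> // c c' c'' Hs _ IH /IH; apply: rm_reach_step. Qed.

Lemma rm_reach_halted_uniq M c c1 c2 : rm_reach M c c1 -> rm_reach M c c2 ->
  rm_step M c1 = None -> rm_step M c2 = None -> c1 = c2.
Proof.
move=> H; elim: H c2 => [c0|c0 c0' c0'' Hs _ IH] c2 H2 Hn1 Hn2.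
- by case: H2 Hn1 => // c3 c' c'' Hs _; rewrite Hs.
- case: H2 Hs Hn2 => [c3 Hs Hn|c3 c' c'' Hs' H' Hs Hn2]; first by rewrite Hs in Hn.
  by move: Hs; rewrite Hs' => -[Ec]; subst c'; apply: IH.
Qed.

(** * Loop programs *)

(* [CLoop x c] runs [while x <> 0 do (x := x - 1; c)]. *)
Inductive cmd := CInc of nat | CLoop of nat & cmd | CSeq of cmd & cmd | CSkip.

Inductive exec : cmd -> (nat -> nat) -> (nat -> nat) -> Prop :=
| exec_inc x s : exec (CInc x) s (upd s x (s x).+1)
| exec_skip s : exec CSkip s s
| exec_seq c1 c2 s s1 s2 : exec c1 s s1 -> exec c2 s1 s2 -> exec (CSeq c1 c2) s s2
| exec_loop0 x c s : s x = 0 -> exec (CLoop x c) s s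
| exec_loopS x c s s1 s2 : 0 < s x -> exec c (upd s x (s x).-1) s1 ->
    exec (CLoop x c) s1 s2 -> exec (CLoop x c) s s2.

Lemma exec_loop_inv x body (P : nat -> (nat -> nat) -> Prop) :
  (forall t, P 0 t -> t x = 0) ->
  (forall k t, P k.+1 t ->
     0 < t x /\ exists2 t', exec body (upd t x (t x).-1) t' & P k t') ->
  forall k t, P k t -> exists2 t', exec (CLoop x body) t t' & P 0 t'.
Proof.
move=> Hstop Hiter; elim=> [|k IH] t Ht; first by exists t => //; apply: exec_loop0; apply: Hstop.
have [Hx [t1 Hbody /IH [t' Hloop Ht']]] := Hiter k t Ht.
by exists t' => //; apply: exec_loopS Hbody Hloop.
Qed.

Lemma exec_loop_path x body (F : nat -> nat -> nat) n :
  (forall k, k <= n -> F k x = k) ->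
  (forall k, k < n -> exec body (upd (F k.+1) x k) (F k)) ->
  exec (CLoop x body) (F n) (F 0).
Proof.
elim: n => [|n IH] Hx Hb; first by apply: exec_loop0; apply: Hx.
apply: exec_loopS (IH _ _); rewrite ?Hx //; first exact: Hb.
- by move=> k Hk; apply: Hx; lia.
- by move=> k Hk; apply: Hb; lia.
Qed.

Fixpoint code_size (c : cmd) : nat :=
  match c with
  | CInc _ => 1
  | CSkip => 0
  | CSeq c1 c2 => code_size c1 + code_size c2
  | CLoop _ b => (code_size b).+2
  end.

(* Jump targets are absolute, so the code of [c] depends on its address [o]. *)
Fixpoint compile (o : nat) (c : cmd) : seq instr :=
  match c with
  | CInc x => [:: Inc x]
  | CSkip => [::]
  | CSeq c1 c2 => compile o c1 ++ compile (o + code_size c1) c2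
  | CLoop x b => DecJz x (o + (code_size b).+2) :: compile o.+1 b ++ [:: Jmp o]
  end.

Lemma size_compile o c : size (compile o c) = code_size c.
Proof.
elim: c o => //= [x b IH|c1 IH1 c2 IH2] o; first by rewrite size_cat IH addn1.
by rewrite size_cat IH1 IH2.
Qed.

Definition code_at (M : seq instr) (o : nat) (code : seq instr) :=
  exists pre rest, M = pre ++ code ++ rest /\ size pre = o.

Lemma code_at_catl M o c1 c2 : code_at M o (c1 ++ c2) -> code_at M o c1.
Proof. by case=> pre [rest [-> <-]]; exists pre, (c2 ++ rest); rewrite -catA. Qed.

Lemma code_at_catr M o c1 c2 : code_at M o (c1 ++ c2) -> code_at M (o + size c1) c2.
Proof.
case=> pre [rest [-> <-]]; exists (pre ++ c1), rest.
by rewrite size_cat !catA.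
Qed.

Lemma code_at_size M o code : code_at M o code -> o + size code <= size M.
Proof. by case=> pre [rest [-> <-]]; rewrite !size_cat addnA leq_addr. Qed.

Lemma code_at_head M o i code :
  code_at M o (i :: code) -> o < size M /\ nth (Jmp 0) M o = i.
Proof.
move=> Hc; have /= Hs := code_at_size Hc; split; first lia.
by case: Hc => pre [rest [-> <-]]; rewrite nth_cat ltnn subnn.
Qed.

Lemma rm_step_head M o i code s :
  code_at M o (i :: code) -> rm_step M (o, s) =
  match i with
  | Inc r => Some (o.+1, upd s r (s r).+1)
  | DecJz r t => if s r == 0 then Some (minn t (size M), s)
                 else Some (o.+1, upd s r (s r).-1)
  | Jmp t => Some (minn t (size M), s)
  end.
Proof. by move=> /code_at_head [Ho Hi]; rewrite /rm_step Ho Hi. Qed.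

Theorem exec_compile c s s' M o : exec c s s' ->
  code_at M o (compile o c) -> rm_reach M (o, s) (o + code_size c, s').
Proof.
move=> H; elim: H M o => {c s s'}.
- move=> x s M o /= Hc; rewrite addn1.
  by apply: rm_reach_step (rm_reach_refl _ _); rewrite (rm_step_head s Hc).
- by move=> s M o _; rewrite addn0; apply: rm_reach_refl.
- move=> c1 c2 s s1 s2 _ IH1 _ IH2 M o /= Hc.
  apply: rm_reach_trans (IH1 M o (code_at_catl Hc)) _.
  by rewrite addnA; apply: IH2; move: (code_at_catr Hc); rewrite size_compile.
- move=> x b s Hx M o /= Hc.
  have /= := code_at_size Hc; rewrite size_cat size_compile /= => Hs.
  apply: rm_reach_step (rm_reach_refl _ _).
  by rewrite (rm_step_head s Hc) Hx eqxx; congr (Some (_, _)); lia.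
- move=> x b s s1 s2 Hx _ IHb _ IHl M o /= Hc.
  have /= := code_at_size Hc; rewrite size_cat size_compile /= => Hs.
  have := @code_at_catr M o [:: DecJz x (o + (code_size b).+2)] _ Hc.
  rewrite /= addn1 => Hbody.
  have Hb := code_at_catl Hbody.
  have := code_at_catr Hbody; rewrite size_compile => Hj.
  apply: rm_reach_step; first by rewrite (rm_step_head s Hc) (negbTE (lt0n_neq0 Hx)).
  apply: rm_reach_trans (IHb M o.+1 Hb) _.
  apply: (@rm_reach_step _ _ (o, s1)); last exact: IHl.
  by rewrite (rm_step_head s1 Hj); congr (Some (_, _)); lia.
Qed.

Definition clear x := CLoop x CSkip.
Definition addto x y := CLoop x (CInc y).
Definition move x y := CSeq (clear y) (addto x y).
Definition copy x y t :=
  CSeq (clear y) (CSeq (clear t) (CSeq (CLoop x (CSeq (CInc y) (CInc t))) (addto t x))).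

Lemma exec_clear x s : exec (clear x) s (upd s x 0).
Proof.
have := @exec_loop_path x CSkip (upd s x) (s x).
rewrite upd_id; apply=> k _; rewrite ?upd_same // upd_upd; exact: exec_skip.
Qed.

Lemma exec_addto x y s : x <> y -> exec (addto x y) s (upd (upd s y (s y + s x)) x 0).
Proof.
move=> nxy; pose F k := upd (upd s y (s y + (s x - k))) x k.
have -> : upd (upd s y (s y + s x)) x 0 = F 0 by rewrite /F subn0.
have {1}-> : s = F (s x) by rewrite /F subnn addn0; upd_ext.
apply: exec_loop_path => k Hk; first by rewrite /F upd_same.
have -> : F k = upd (upd (F k.+1) x k) y (upd (F k.+1) x k y).+1 by rewrite /F; upd_ext.
exact: exec_inc.
Qed.

Lemma exec_move x y s : x <> y -> exec (move x y) s (upd (upd s y (s x)) x 0).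
Proof.
move=> nxy; apply: exec_seq (exec_clear _ _) _.
have -> : upd (upd s y (s x)) x 0 = upd (upd (upd s y 0) y (upd s y 0 y + upd s y 0 x)) x 0.
  by upd_ext.
exact: exec_addto.
Qed.

Lemma exec_copy x y t s : x <> y -> x <> t -> y <> t ->
  exec (copy x y t) s (upd (upd s y (s x)) t 0).
Proof.
move=> nxy nxt nyt.
apply: exec_seq (exec_clear _ _) _; apply: exec_seq (exec_clear _ _) _.
set s0 := upd (upd s y 0) t 0.
pose F k := upd (upd (upd s0 y (s x - k)) t (s x - k)) x k.
have Hloop : exec (CLoop x (CSeq (CInc y) (CInc t))) (F (s x)) (F 0).
  apply: exec_loop_path => k Hk; first by rewrite /F upd_same.
  apply: exec_seq; first exact: exec_inc.
  have -> : F k = upd (upd (upd (F k.+1) x k) y (upd (F k.+1) x k y).+1) t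
     (upd (upd (F k.+1) x k) y (upd (F k.+1) x k y).+1 t).+1 by rewrite /F /s0; upd_ext.
  exact: exec_inc.
have -> : s0 = F (s x) by rewrite /F /s0 subnn; upd_ext.
apply: exec_seq Hloop _.
have -> : upd (upd s y (s x)) t 0 = upd (upd (F 0) x (F 0 x + F 0 t)) t 0.
  by rewrite /F /s0 subn0; upd_ext.
exact: exec_addto (not_eq_sym nxt).
Qed.

(** * Compiling partial recursive functions to loop programs *)

Definition prf_ind_nested (P : prf -> Prop) (H0 : P PZero) (H1 : P PSucc)
  (H2 : forall i, P (PProj i))
  (H3 : forall f gs, P f -> List.Forall P gs -> P (PComp f gs))
  (H4 : forall f g, P f -> P g -> P (PRec f g))
  (H5 : forall f, P f -> P (PMin f)) : forall p, P p :=
  fix F p := match p return P p with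
  | PZero => H0 | PSucc => H1 | PProj i => H2 i
  | PComp f gs => H3 f gs (F f)
      ((fix G gs := match gs return List.Forall P gs with
        | [::] => List.Forall_nil P
        | g :: gs' => List.Forall_cons g (F g) (G gs') end) gs)
  | PRec f g => H4 f g (F f) (F g)
  | PMin f => H5 f (F f)
  end.

Fixpoint loop_of_prfs (lp : prf -> seq nat -> nat -> nat -> cmd) (gs : seq prf)
   (ins : seq nat) (o b : nat) : cmd :=
  match gs with
  | [::] => CSkip
  | g :: gs' => CSeq (lp g ins o b) (loop_of_prfs lp gs' ins o.+1 b)
  end.

(* [loop_of_prf p ins out b] reads the arguments of [p] from the registers
   [ins], writes the result to [out], and uses the registers [>= b] as scratch. *)
Fixpoint loop_of_prf (p : prf) (ins : seq nat) (out b : nat) : cmd :=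
  match p with
  | PZero => clear out
  | PSucc => if ins is i0 :: _ then CSeq (copy i0 b b.+1) (CSeq (move b out) (CInc out))
             else CSkip
  | PProj i => CSeq (copy (nth 0 ins i) b b.+1) (move b out)
  | PComp f gs =>
      let m := size gs in
      CSeq (loop_of_prfs loop_of_prf gs ins b (b + m))
           (CSeq (loop_of_prf f (iota b m) (b + m) (b + m).+1) (move (b + m) out))
  | PRec f g =>
      if ins is i0 :: ins' then
        CSeq (copy i0 b (b + 3)) (CSeq (clear (b + 1)) (CSeq (loop_of_prf f ins' (b + 2) (b + 4))
        (CSeq (CLoop b (CSeq (loop_of_prf g [:: b + 1, b + 2 & ins'] (b + 3) (b + 4))
                             (CSeq (move (b + 3) (b + 2)) (CInc (b + 1)))))
              (move (b + 2) out))))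
      else CSkip
  | PMin f =>
      CSeq (clear b) (CSeq (loop_of_prf f (b :: ins) b.+1 b.+2)
      (CSeq (CLoop b.+1 (CSeq (clear b.+1) (CSeq (CInc b) (loop_of_prf f (b :: ins) b.+1 b.+2))))
            (move b out)))
  end.

Definition loop_of_prf_spec (p : prf) := forall args y, prf_eval p args y ->
  forall ins out b s, map s ins = args -> all (fun r => r < b) ins -> out < b ->
  exists2 s', exec (loop_of_prf p ins out b) s s' &
    s' out = y /\ forall r, r < b -> r <> out -> s' r = s r.

Lemma map_eq_below (s s' : nat -> nat) ins b : all (fun r => r < b) ins ->
  (forall r, r < b -> s' r = s r) -> map s' ins = map s ins.
Proof. by move=> /allP Hins Hs; apply/eq_in_map => r /Hins /Hs. Qed.

Lemma all_ltn_leq ins b b' : all (fun r => r < b) ins -> b <= b' -> all (fun r => r < b') ins.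
Proof. by move=> Hins Hb; apply: sub_all Hins => r /leq_trans; apply. Qed.

Lemma prf_eval_rec_trace f g n args y : prf_eval (PRec f g) (n :: args) y ->
  exists rs : nat -> nat, [/\ prf_eval f args (rs 0),
    forall k, k < n -> prf_eval g [:: k, rs k & args] (rs k.+1) & rs n = y].
Proof.
elim: n y => [|n IH] y H; inversion H; subst; first by exists (fun=> y).
have [rs [Hf Hg Hn]] := IH _ H5.
exists (upd rs n.+1 y); split; rewrite ?upd_same //.
move=> k Hk; rewrite !updE eqSS ltn_eqF //.
by case: eqP => [->|Hkn]; [rewrite Hn | apply: Hg; lia].
Qed.

Lemma loop_of_prf_zero : loop_of_prf_spec PZero.
Proof.
move=> args y H ins out b s _ _ _; inversion H; subst.
exists (upd s out 0); first exact: exec_clear.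
by split=> [|r _ Hr]; simpl_upd.
Qed.

Lemma loop_of_prf_succ : loop_of_prf_spec PSucc.
Proof.
move=> args y H; inversion H; subst => ins out b s Hm Hins Hout.
case: ins Hm Hins => //= i0 ins [Hi0 _] /andP [Hib _].
eexists.
  apply: exec_seq; first (apply: exec_copy; lia).
  apply: exec_seq; first (apply: exec_move; lia).
  exact: exec_inc.
by split=> [|r Hr Hro]; simpl_upd.
Qed.

Lemma loop_of_prf_proj i : loop_of_prf_spec (PProj i).
Proof.
move=> args y H; inversion H; subst => ins out b s Hm Hins Hout.
subst args; move: H1; rewrite size_map => Hi.
have Hib : nth 0 ins i < b by apply: (allP Hins); apply: mem_nth.
eexists.
  apply: exec_seq; first (apply: exec_copy; lia).
  apply: exec_move; lia.
by split=> [|r Hr Hro]; rewrite ?(nth_map 0) //; simpl_upd.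
Qed.

Lemma loop_of_prfs_spec gs : List.Forall loop_of_prf_spec gs ->
  forall args ys, prf_evals gs args ys ->
  forall ins o b s, map s ins = args -> all (fun r => r < o) ins -> o + size gs <= b ->
  exists2 s', exec (loop_of_prfs loop_of_prf gs ins o b) s s' &
    map s' (iota o (size gs)) = ys /\
    forall r, r < b -> (r < o \/ o + size gs <= r) -> s' r = s r.
Proof.
elim=> [|g gs1 Hg _ IH] args ys H ins o b s Hm Hins /= Hb; inversion H; subst.
  by exists s => //; apply: exec_skip.
have Hinsb : all (fun r => r < b) ins by apply: all_ltn_leq Hins _; lia.
have [s1 E1 [O1 P1]] := Hg _ _ H2 ins o b s erefl Hinsb (ltac:(lia)).
have Hm1 : map s1 ins = map s ins by apply: (map_eq_below Hins) => r Hr; apply: P1; lia.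
have [s2 E2 [O2 P2]] := IH _ _ H5 ins o.+1 b s1 Hm1 (all_ltn_leq Hins (leqnSn o)) (ltac:(lia)).
exists s2; first exact: exec_seq E1 E2.
split; first by rewrite /= O2 P2 ?O1 //; lia.
by move=> r Hr Hro; rewrite P2 ?P1 //; lia.
Qed.

Lemma loop_of_prf_comp f gs :
  loop_of_prf_spec f -> List.Forall loop_of_prf_spec gs -> loop_of_prf_spec (PComp f gs).
Proof.
move=> Hf Hgs args y H; inversion H; subst => ins out b s Hm Hins Hout.
have [s1 E1 [O1 P1]] := loop_of_prfs_spec Hgs H2 Hm Hins (leqnn (b + size gs)).
have Hiota : all (fun r => r < (b + size gs).+1) (iota b (size gs)).
  by apply/allP => r; rewrite mem_iota; lia.
have [s2 E2 [O2 P2]] :=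
  Hf _ _ H5 (iota b (size gs)) (b + size gs) (b + size gs).+1 s1 O1 Hiota (ltnSn _).
eexists.
  apply: exec_seq E1 _; apply: exec_seq E2 _; apply: exec_move; lia.
by split=> [|r Hr Hro]; simpl_upd; rewrite P2 ?P1 //; lia.
Qed.

Lemma loop_of_prf_rec f g :
  loop_of_prf_spec f -> loop_of_prf_spec g -> loop_of_prf_spec (PRec f g).
Proof.
move=> Hf Hg args y H ins out b s Hm Hins Hout.
case: ins Hm Hins => [|i0 ins'] Hm Hins; first by subst args; inversion H.
subst args; move: Hins => /= /andP [Hi0 Hins'].
have [rs [Hf0 Hgk Hlast]] := prf_eval_rec_trace H.
set n := s i0 in Hf0 Hgk Hlast.
set s2 := upd (upd (upd s b n) (b + 3) 0) (b + 1) 0.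
have Hm2 : map s2 ins' = map s ins'.
  by apply: (map_eq_below Hins') => r Hr; rewrite /s2; simpl_upd.
have [s3 E3 [O3 P3]] :=
  Hf _ _ Hf0 ins' (b + 2) (b + 4) s2 Hm2 (all_ltn_leq Hins' (leq_addr _ _)) (ltac:(lia)).
pose body := CSeq (loop_of_prf g [:: b + 1, b + 2 & ins'] (b + 3) (b + 4))
                  (CSeq (move (b + 3) (b + 2)) (CInc (b + 1))).
(* Invariant when [k] iterations remain. *)
pose P k t := [/\ k <= n, t b = k, t (b + 1) = n - k, t (b + 2) = rs (n - k)
                & forall r, r < b -> t r = s r].
have Hstop t : P 0 t -> t b = 0 by case.
have Hiter k t : P k.+1 t ->
    0 < t b /\ exists2 t', exec body (upd t b (t b).-1) t' & P k t'.
  case=> Hk Hb Hb1 Hb2 Hlow; rewrite Hb; split=> //=.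
  set u := upd t b k.
  have Hmu : map u [:: b + 1, b + 2 & ins'] = [:: n - k.+1, rs (n - k.+1) & map s ins'].
    rewrite /= /u !updE; do 2!(case: eqP => [|_]; first lia).
    rewrite Hb1 Hb2; congr [:: _, _ & _].
    by apply: (map_eq_below Hins') => r Hr; simpl_upd; rewrite Hlow.
  have Hall : all (fun r => r < b + 4) [:: b + 1, b + 2 & ins'].
    by rewrite /= (all_ltn_leq Hins' (leq_addr _ _)); lia.
  have [u1 E4 [O4 P4]] := Hg _ _ (Hgk (n - k.+1) (ltac:(lia))) _ (b + 3) (b + 4) u Hmu Hall (ltac:(lia)).
  eexists.
    apply: exec_seq E4 _; apply: exec_seq; first (apply: exec_move; lia).
    exact: exec_inc.
  split; first lia.
  - by simpl_upd; rewrite P4 /u; simpl_upd.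
  - by simpl_upd; rewrite P4 /u; simpl_upd.
  - by simpl_upd; rewrite O4 subnSK.
  - by move=> r Hr; simpl_upd; rewrite P4 /u; simpl_upd; rewrite Hlow.
have Hstart : P n s3.
  split; rewrite ?subnn ?O3 //; first by rewrite P3 /s2; simpl_upd.
  - by rewrite P3 /s2; simpl_upd.
  - by move=> r Hr; rewrite P3 /s2; simpl_upd.
have [t Eloop [_ _ _ Hy Hlow]] := exec_loop_inv Hstop Hiter Hstart.
eexists.
  apply: exec_seq; first (apply: exec_copy; lia).
  apply: exec_seq; first exact: exec_clear.
  apply: exec_seq E3 _; apply: exec_seq Eloop _.
  apply: exec_move; lia.
by split=> [|r Hr Hro]; simpl_upd; rewrite ?Hy ?subn0 ?Hlow.
Qed.

Lemma loop_of_prf_min f : loop_of_prf_spec f -> loop_of_prf_spec (PMin f).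
Proof.
move=> Hf args n H; inversion H; subst => ins out b s Hm Hins Hout.
have Hval m : m <= n -> exists2 v, prf_eval f (m :: args) v & (v == 0) = (m == n).
  case: (ltnP m n) => [Hmn _|Hnm Hmn].
    by have [v Hv] := H2 m Hmn; exists v.+1; rewrite ?(ltn_eqF Hmn).
  have -> : m = n by lia.
  by exists 0; rewrite ?eqxx.
set s1 := upd s b 0.
have Hall : all (fun r => r < b.+2) (b :: ins).
  by rewrite /= (all_ltn_leq Hins (leqW (leqnSn b))) ltnW.
have Hm1 : map s1 (b :: ins) = 0 :: args.
  rewrite /= /s1 upd_same -Hm; congr (_ :: _).
  by apply: (map_eq_below Hins) => r Hr; simpl_upd.
have [v0 Hv0 Z0] := Hval 0 (leq0n _).
have [s2 E2 [O2 P2]] := Hf _ _ Hv0 (b :: ins) b.+1 b.+2 s1 Hm1 Hall (ltnSn _).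
pose body := CSeq (clear b.+1) (CSeq (CInc b) (loop_of_prf f (b :: ins) b.+1 b.+2)).
(* Invariant when [k] iterations remain: [b] holds the candidate [n - k]. *)
pose P k t := [/\ k <= n, t b = n - k, (t b.+1 == 0) = (k == 0)
                & forall r, r < b -> t r = s r].
have Hstop t : P 0 t -> t b.+1 = 0 by case=> _ _ Hz _; apply/eqP; rewrite Hz.
have Hiter k t : P k.+1 t ->
    0 < t b.+1 /\ exists2 t', exec body (upd t b.+1 (t b.+1).-1) t' & P k t'.
  case=> Hk Hb Hz Hlow; split; first by rewrite lt0n Hz.
  set u0 := upd (upd t b.+1 (t b.+1).-1) b.+1 0.
  set u := upd u0 b (u0 b).+1.
  have [v Hv Zv] := Hval (n - k) (leq_subr _ _).
  have Hmu : map u (b :: ins) = (n - k) :: args.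
    rewrite /= /u /u0 !updE eqxx; case: eqP => [|_]; first lia.
    rewrite Hb subnSK // -Hm; congr (_ :: _).
    by apply: (map_eq_below Hins) => r Hr; simpl_upd; rewrite Hlow.
  have [u1 E4 [O4 P4]] := Hf _ _ Hv _ b.+1 b.+2 u Hmu Hall (ltnSn _).
  exists u1.
    apply: exec_seq; first exact: exec_clear.
    apply: exec_seq; first exact: exec_inc.
    exact: E4.
  split; first lia.
  - by rewrite P4 /u /u0; simpl_upd.
  - by rewrite O4 Zv; apply/idP/idP => /eqP ?; apply/eqP; lia.
  - by move=> r Hr; rewrite P4 /u /u0; simpl_upd; rewrite Hlow.
have Hstart : P n s2.
  split; rewrite ?subnn ?O2 ?Z0 1?eq_sym //; first by rewrite P2 /s1; simpl_upd.
  by move=> r Hr; rewrite P2 /s1; simpl_upd.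
have [t Eloop [_ Hn _ Hlow]] := exec_loop_inv Hstop Hiter Hstart.
eexists.
  apply: exec_seq; first exact: exec_clear.
  apply: exec_seq E2 _; apply: exec_seq Eloop _.
  apply: exec_move; lia.
by split=> [|r Hr Hro]; simpl_upd; rewrite ?Hn ?subn0 ?Hlow.
Qed.

Theorem loop_of_prfP p : loop_of_prf_spec p.
Proof.
elim/prf_ind_nested: p.
- exact: loop_of_prf_zero.
- exact: loop_of_prf_succ.
- exact: loop_of_prf_proj.
- exact: loop_of_prf_comp.
- exact: loop_of_prf_rec.
- exact: loop_of_prf_min.
Qed.

Section Connectives.
Variable Sigma : eqType.
Implicit Types (env : nat -> nat -> bool) (w : seq Sigma) (a b : Defs.form Sigma).

Definition FFalse : Defs.form Sigma := FCmp [::] CLt 0%R.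
Definition FTrue : Defs.form Sigma := FNot FFalse.
Definition FOr a b : Defs.form Sigma := FNot (FAnd (FNot a) (FNot b)).
Definition FBigOr (l : seq (Defs.form Sigma)) := foldr FOr FFalse l.
Definition FBigAnd (l : seq (Defs.form Sigma)) := foldr FAnd FTrue l.

Lemma eval_FAnd env w a b j : eval env w (FAnd a b) j = eval env w a j && eval env w b j.
Proof. by []. Qed.

Lemma eval_FNot env w a j : eval env w (FNot a) j = ~~ eval env w a j.
Proof. by []. Qed.

Lemma eval_FOr env w a b j : eval env w (FOr a b) j = eval env w a j || eval env w b j.
Proof. by rewrite /FOr /= negb_and !negbK. Qed.

Lemma eval_FBigOr env w l j : eval env w (FBigOr l) j = has (fun f => eval env w f j) l.
Proof. by elim: l => //= f l <-; rewrite -eval_FOr. Qed.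

Lemma eval_FBigAnd env w l j : eval env w (FBigAnd l) j = all (fun f => eval env w f j) l.
Proof. by elim: l => //= f l <-. Qed.

Lemma refs_ok_FAnd n a b : refs_ok n a -> refs_ok n b -> refs_ok n (FAnd a b).
Proof. by move=> /= -> ->. Qed.

Lemma refs_ok_FOr n a b : refs_ok n a -> refs_ok n b -> refs_ok n (FOr a b).
Proof. by rewrite /FOr => /= -> ->. Qed.

Lemma refs_ok_FBigOr n l : all (refs_ok n) l -> refs_ok n (FBigOr l).
Proof. by elim: l => //= f l IH /andP [-> /IH]. Qed.

Lemma refs_ok_FBigAnd n l : all (refs_ok n) l -> refs_ok n (FBigAnd l).
Proof. by elim: l => //= f l IH /andP [-> /IH]. Qed.

Lemma fsize_FBigOr (T : Type) (F G : T -> Defs.form Sigma) l K :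
  (forall x, fsize (F x) <= fsize (G x) + K) ->
  fsize (FBigOr (map F l)) <= fsize (FBigOr (map G l)) + size l * K.
Proof. by move=> H; elim: l => [|x l IH] /=; [lia | have := H x; lia]. Qed.

Lemma fsize_FBigAnd (T : Type) (F G : T -> Defs.form Sigma) l K :
  (forall x, fsize (F x) <= fsize (G x) + K) ->
  fsize (FBigAnd (map F l)) <= fsize (FBigAnd (map G l)) + size l * K.
Proof. by move=> H; elim: l => [|x l IH] /=; [lia | have := H x; lia]. Qed.

Lemma fsize_FCmp_le (ts : seq (int * Defs.term Sigma)) o k k' n :
  int_size k <= int_size k' + n -> fsize (FCmp ts o k) <= fsize (FCmp ts o k') + n.
Proof. rewrite /=; lia. Qed.

End Connectives.

Arguments FFalse {Sigma}.
Arguments FTrue {Sigma}.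

(** * Words encoding register machine runs *)

Local Open Scope ring_scope.

Definition lUp : 'I_6 := Ordinal (isT : 0 < 6)%N.
Definition lDown : 'I_6 := Ordinal (isT : 1 < 6)%N.
Definition lInc : 'I_6 := Ordinal (isT : 2 < 6)%N.
Definition lDec : 'I_6 := Ordinal (isT : 3 < 6)%N.
Definition lZero : 'I_6 := Ordinal (isT : 4 < 6)%N.
Definition lJmp : 'I_6 := Ordinal (isT : 5 < 6)%N.
Definition instr_letters := [:: lInc; lDec; lZero; lJmp].

Inductive effect := EInc of nat | EDec of nat | EZero of nat | ENone.

Definition effect_code (x : effect) : nat * nat :=
  match x with EInc r => (0, r) | EDec r => (1, r) | EZero r => (2, r) | ENone => (3, 0) end%N.
Definition effect_decode (p : nat * nat) : effect :=
  match p with (0, r) => EInc r | (1, r) => EDec r | (2, r) => EZero r | _ => ENone end%N.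
Lemma effect_codeK : cancel effect_code effect_decode. Proof. by case. Qed.
HB.instance Definition _ := Equality.copy effect (can_type effect_codeK).

Record transition := Transition { src : nat; label : 'I_6; dst : nat; eff : effect }.

Definition transition_tuple (e : transition) := (src e, label e, dst e, eff e).
Definition tuple_transition (p : nat * 'I_6 * nat * effect) :=
  let: (q, a, q', x) := p in Transition q a q' x.
Lemma transition_tupleK : cancel transition_tuple tuple_transition. Proof. by case. Qed.
HB.instance Definition _ := Equality.copy transition (can_type transition_tupleK).

Definition instr_transitions (L q : nat) (i : instr) : seq transition :=
  match i with
  | Inc r => [:: Transition q lInc q.+1 (EInc r)]
  | DecJz r t => [:: Transition q lDec q.+1 (EDec r); Transition q lZero (minn t L) (EZero r)]
  | Jmp t => [:: Transition q lJmp (minn t L) ENone]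
  end.

Definition transitions (M : seq instr) : seq transition :=
  flatten [seq instr_transitions (size M) q (nth (Jmp 0) M q) | q <- iota 0 (size M)].

Definition instr_regs (i : instr) : seq nat :=
  match i with Inc r | DecJz r _ => [:: r] | Jmp _ => [::] end.

Definition machine_regs (M : seq instr) : seq nat := flatten (map instr_regs M).

Definition init_regs (c : nat) : nat -> nat := fun r => if r == 0%N then c else 0%N.

(* An instruction letter at height [q] fires the transition of address [q]
   carrying that label.  The [tokens] on an address count the transitions
   entering it minus those leaving it; along a valid run exactly one token
   sits on the current address. *)
Section Encoding.
Variables (M : seq instr) (c : nat).
Implicit Types (w : seq 'I_6) (e : transition).

Definition letter_at w (a : 'I_6) (j : nat) : bool :=
  (0 < j)%N && (nth None (map Some w) j.-1 == Some a).

Definition height w j : int :=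
  (count (letter_at w lUp) (iota 1 j))%:Z - (count (letter_at w lDown) (iota 1 j))%:Z.

Definition fires w e j := letter_at w (label e) j && (height w j == (src e)%:Z).

Definition weighted w (cf : transition -> int) j : int :=
  \sum_(e <- transitions M) cf e * (count (fires w e) (iota 1 j))%:Z.

Definition reg_delta r e : int :=
  match eff e with EInc r' => (r' == r)%:Z | EDec r' => - (r' == r)%:Z | _ => 0 end.

Definition addr_delta q e : int := (dst e == q)%:Z - (src e == q)%:Z.

Definition reg_value w r j := (init_regs c r)%:Z + weighted w (reg_delta r) j.

Definition tokens w q j := (q == 0%N)%:Z + weighted w (addr_delta q) j.

Definition guard_ok w e j := if eff e is EZero r then reg_value w r j == 0 else true.

Definition valid_at w j :=
  [&& ~~ has (letter_at w ^~ j) instr_letters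
        || has (fun e => fires w e j && guard_ok w e j) (transitions M),
      all (fun r => 0 <= reg_value w r j) (machine_regs M) &
      all (fun q => 0 <= tokens w q j) (iota 0 (size M))].

Definition encodes_run w :=
  all (valid_at w) (iota 1 (size w)) && (1 <= tokens w (size M) (size w)).

Definition fFires e : Defs.form 'I_6 :=
  FAnd (FSym (label e))
       (FCmp [:: (1, TCount (FSym lUp)); (-1, TCount (FSym lDown))] CEq (src e)%:Z).

Definition fWeighted (cf : transition -> int) o k : Defs.form 'I_6 :=
  FCmp [seq (cf e, TCount (fFires e)) | e <- transitions M] o k.

Definition fRegGe r := fWeighted (reg_delta r) CGe (- (init_regs c r)%:Z).
Definition fRegEq r := fWeighted (reg_delta r) CEq (- (init_regs c r)%:Z).
Definition fTokensGe q k := fWeighted (addr_delta q) CGe (k - (q == 0%N)%:Z).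
Definition fGuard e := if eff e is EZero r then fRegEq r else FTrue.

Definition fValid :=
  FAnd (FAnd (FOr (FNot (FBigOr [seq FSym a | a <- instr_letters]))
                   (FBigOr [seq FAnd (fFires e) (fGuard e) | e <- transitions M]))
             (FBigAnd [seq fRegGe r | r <- machine_regs M]))
       (FBigAnd [seq fTokensGe q 0 | q <- iota 0 (size M)]).

Definition run_formula := FAnd (FBox fValid) (fTokensGe (size M) 1).

Section Eval.
Variables (env : nat -> nat -> bool) (w : seq 'I_6).

Lemma eval_fFires e j : eval env w (fFires e) j = fires w e j.
Proof. by rewrite /= mul1r mulN1r addr0. Qed.

Lemma eval_fWeighted cf o k j : eval env w (fWeighted cf o k) j = cmpb o (weighted w cf j) k.
Proof.
rewrite /= /weighted; congr cmpb; elim: (transitions M) => [|e E IH] /=.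
  by rewrite big_nil.
by rewrite big_cons IH (eq_count (eval_fFires e)).
Qed.

Lemma eval_fGuard e j : eval env w (fGuard e) j = guard_ok w e j.
Proof.
rewrite /fGuard /guard_ok; case: (eff e) => // r.
by rewrite eval_fWeighted /= /reg_value; apply/eqP/eqP; lia.
Qed.

Lemma eval_fValid j : eval env w fValid j = valid_at w j.
Proof.
rewrite /fValid !eval_FAnd eval_FOr eval_FNot !eval_FBigOr !eval_FBigAnd !has_map !all_map.
rewrite -andbA /valid_at; congr [&& ~~ _ || _, _ & _].
- by apply: eq_has => e; rewrite -(eval_fFires e j) -(eval_fGuard e j).
- apply: eq_all => r; rewrite -[LHS]/(eval env w (fRegGe r) j) eval_fWeighted /=.
  by rewrite /reg_value; apply/idP/idP; lia.
- apply: eq_all => q; rewrite -[LHS]/(eval env w (fTokensGe q 0) j) eval_fWeighted /=.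
  by rewrite /tokens; apply/idP/idP; lia.
Qed.

Lemma eval_run_formula : eval env w run_formula (size w) = encodes_run w.
Proof.
rewrite /run_formula eval_FAnd eval_fWeighted /encodes_run.
congr (_ && _); first by rewrite -(eq_all eval_fValid).
by rewrite /tokens /=; apply/idP/idP; lia.
Qed.

End Eval.

Lemma refs_ok_fWeighted n cf o k : refs_ok n (fWeighted cf o k).
Proof. by rewrite /=; elim: (transitions M). Qed.

Lemma refs_ok_run_formula n : refs_ok n run_formula.
Proof.
have Hmap (T : Type) (F : T -> Defs.form 'I_6) l :
    (forall x, refs_ok n (F x)) -> all (refs_ok n) (map F l).
  by move=> HF; elim: l => //= x l ->; rewrite HF.
apply: refs_ok_FAnd; last exact: refs_ok_fWeighted.
change (refs_ok n fValid); apply: refs_ok_FAnd.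
  apply: refs_ok_FAnd; last by apply/refs_ok_FBigAnd/Hmap => r; apply: refs_ok_fWeighted.
  apply: refs_ok_FOr.
    by change (refs_ok n (FBigOr [seq FSym a | a <- instr_letters])); apply/refs_ok_FBigOr/Hmap.
  apply/refs_ok_FBigOr/Hmap => e.
  by apply: refs_ok_FAnd => //; rewrite /fGuard; case: (eff e) => // r; apply: refs_ok_fWeighted.
by apply/refs_ok_FBigAnd/Hmap => q; apply: refs_ok_fWeighted.
Qed.

End Encoding.

(** * Accepted words encode halting runs *)

Lemma iota1S j : iota 1 j.+1 = rcons (iota 1 j) j.+1.
Proof. by have := iotaD 1 j 1; rewrite addn1 cats1 add1n. Qed.

Lemma count_iota1S (P : pred nat) j : count P (iota 1 j.+1) = (count P (iota 1 j) + P j.+1)%N.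
Proof. by rewrite iota1S -cats1 count_cat /= addn0. Qed.

Lemma letter_at_uniq w a b j : letter_at w a j -> letter_at w b j = (b == a).
Proof.
by rewrite /letter_at => /andP [-> /eqP ->] /=; apply/eqP/eqP => [[]|->].
Qed.

Lemma mem_instr_transitions L q i e :
  e \in instr_transitions L q i -> src e = q /\ label e \in instr_letters.
Proof.
by case: i => [r|r t|t]; rewrite !inE;
  [move=> /eqP -> | case/orP => /eqP -> | move=> /eqP ->].
Qed.

Lemma sum_instr_transitions_label L q i e0 (cf : transition -> int) :
  e0 \in instr_transitions L q i ->
  \sum_(e <- instr_transitions L q i) cf e * (label e == label e0)%:Z = cf e0.
Proof.
case: i => [r|r t|t]; rewrite !inE;
  [move=> /eqP -> | case/orP => /eqP -> | move=> /eqP ->];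
by rewrite !big_cons big_nil /= ?eqxx ?mulr1 ?mulr0 ?addr0 ?add0r.
Qed.

(* Only jumps and failed zero tests can loop on their own address, and they
   leave the registers unchanged. *)
Lemma reg_delta_selfloop L q i e r :
  e \in instr_transitions L q i -> dst e = q -> reg_delta r e = 0.
Proof.
case: i => [r'|r' t|t]; rewrite !inE;
  [move=> /eqP -> | case/orP => /eqP -> | move=> /eqP ->] => //= H; lia.
Qed.

Lemma reg_delta_le1 r e : reg_delta r e <= 1.
Proof. by rewrite /reg_delta; case: (eff e) => // r'; case: eqP. Qed.

Section Transitions.
Variable M : seq instr.
Implicit Types (w : seq 'I_6) (e : transition).

Lemma mem_transitions e : e \in transitions M ->
  exists2 q, (q < size M)%N & e \in instr_transitions (size M) q (nth (Jmp 0) M q).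
Proof.
rewrite /transitions => /flattenP [l /mapP [q Hq ->] He].
by exists q => //; move: Hq; rewrite mem_iota.
Qed.

Lemma transitions_mem q e : (q < size M)%N ->
  e \in instr_transitions (size M) q (nth (Jmp 0) M q) -> e \in transitions M.
Proof.
move=> Hq He; apply/flattenP; exists (instr_transitions (size M) q (nth (Jmp 0) M q)) => //.
by apply/mapP; exists q; rewrite ?mem_iota.
Qed.

Lemma dec_reg_mem e r : e \in transitions M -> eff e = EDec r -> r \in machine_regs M.
Proof.
move=> /mem_transitions [q Hq]; set i := nth (Jmp 0) M q => He Hr.
have Hri : r \in instr_regs i.
  move: He Hr; case: i => [r'|r' t|t]; rewrite !inE.
  - by move=> /eqP ->.
  - by case/orP => /eqP -> //= [->].
  - by move=> /eqP ->.
apply/flattenP; exists (instr_regs i) => //.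
by rewrite /i -(nth_map (Jmp 0) [::]) // mem_nth ?size_map.
Qed.

Lemma weighted0 w cf : weighted M w cf 0 = 0.
Proof. by rewrite /weighted big1 // => e _; rewrite mulr0. Qed.

Lemma weightedS w cf j : weighted M w cf j.+1 =
  weighted M w cf j + \sum_(e <- transitions M) cf e * (fires w e j.+1)%:Z.
Proof.
rewrite /weighted -big_split; apply: eq_bigr => e _.
by rewrite count_iota1S PoszD mulrDr.
Qed.

(* At most one transition fires at a position: the letter fixes the label, and
   the height fixes the address. *)
Lemma sum_fires_active w j e0 (cf : transition -> int) :
  e0 \in transitions M -> fires w e0 j ->
  \sum_(e <- transitions M) cf e * (fires w e j)%:Z = cf e0.
Proof.
move=> He0 /andP [Hl /eqP Hh]; have [q0 Hq0 Hin] := mem_transitions He0.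
have [Hsrc _] := mem_instr_transitions Hin.
rewrite /transitions big_flatten /= big_map (bigD1_seq q0) ?iota_uniq ?mem_iota //=.
rewrite [X in _ + X]big1_seq ?addr0 => [|q /andP [Hq _]].
  rewrite -(sum_instr_transitions_label cf Hin); apply: eq_big_seq => e He.
  have [Ee _] := mem_instr_transitions He.
  by rewrite /fires (letter_at_uniq _ Hl) Hh Ee Hsrc eqxx andbT.
apply: big1_seq => e /andP [_ He]; have [Ee _] := mem_instr_transitions He.
rewrite /fires Hh Ee Hsrc; case: eqP => [[Eq]|]; last by rewrite andbF mulr0.
by rewrite Eq eqxx in Hq.
Qed.

Lemma sum_fires_idle w j (cf : transition -> int) :
  ~~ has (letter_at w ^~ j) instr_letters ->
  \sum_(e <- transitions M) cf e * (fires w e j)%:Z = 0.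
Proof.
move=> Hn; apply: big1_seq => e /andP [_ /mem_transitions [q _ /mem_instr_transitions [_ Hl]]].
suff -> : fires w e j = false by rewrite mulr0.
by apply: contraNF Hn => /andP [Hle _]; apply/hasP; exists (label e).
Qed.

End Transitions.

Section Soundness.
Variables (M : seq instr) (c : nat).
Implicit Types (w : seq 'I_6) (e : transition) (regs : nat -> nat).

Lemma tokens_fire w q j e : e \in transitions M -> fires w e j.+1 ->
  tokens M w q j.+1 = tokens M w q j + addr_delta q e.
Proof. by move=> He Hf; rewrite /tokens weightedS (sum_fires_active _ He Hf) addrA. Qed.

Lemma reg_value_fire w r j e : e \in transitions M -> fires w e j.+1 ->
  reg_value M c w r j.+1 = reg_value M c w r j + reg_delta r e.
Proof. by move=> He Hf; rewrite /reg_value weightedS (sum_fires_active _ He Hf) addrA. Qed.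

Lemma step_of_transition e regs : e \in transitions M ->
  (forall r, eff e = EDec r -> (0 < regs r)%N) -> (forall r, eff e = EZero r -> regs r = 0%N) ->
  exists2 regs', rm_step M (src e, regs) = Some (dst e, regs') &
    forall r, (regs' r)%:Z = (regs r)%:Z + reg_delta r e.
Proof.
move=> /mem_transitions [q Hq Hin]; have [Hsrc _] := mem_instr_transitions Hin.
rewrite /rm_step Hsrc Hq; move: Hin; case: (nth _ M q) => [r0|r0 t|t]; rewrite !inE.
- move=> /eqP -> _ _ /=; eexists; first reflexivity.
  by move=> r; rewrite /reg_delta /= updE; do 2?case: eqP => /= ?; subst; lia.
- case/orP => /eqP -> /= Hd Hz.
    have Hpos := Hd r0 erefl; rewrite (negbTE (lt0n_neq0 Hpos)); eexists; first reflexivity.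
    by move=> r; rewrite /reg_delta /= updE; do 2?case: eqP => /= ?; subst; lia.
  by rewrite (Hz r0 erefl) eqxx; eexists; first reflexivity; move=> r; rewrite addr0.
- by move=> /eqP -> _ _ /=; eexists; first reflexivity; move=> r; rewrite addr0.
Qed.

Lemma transition_of_step pc regs pc' regs' : rm_step M (pc, regs) = Some (pc', regs') ->
  exists e, [/\ e \in transitions M, src e = pc, dst e = pc',
    forall r, (regs' r)%:Z = (regs r)%:Z + reg_delta r e &
    forall r, eff e = EZero r -> regs r = 0%N].
Proof.
rewrite /rm_step; case: ifP => // Hpc.
have mem e : e \in instr_transitions (size M) pc (nth (Jmp 0) M pc) -> e \in transitions M.
  exact: transitions_mem.
move: mem; case: (nth _ M pc) => [r0|r0 t|t] mem.
- case=> <- <-; exists (Transition pc lInc pc.+1 (EInc r0)); split=> //.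
    by apply: mem; rewrite inE.
  by move=> r; rewrite /reg_delta /= updE; do 2?case: eqP => /= ?; subst; lia.
- case: eqP => Hz [<- <-].
    exists (Transition pc lZero (minn t (size M)) (EZero r0)); split=> //.
    + by apply: mem; rewrite !inE eqxx orbT.
    + by move=> r; rewrite addr0.
    + by move=> r [<-].
  exists (Transition pc lDec pc.+1 (EDec r0)); split=> //.
    by apply: mem; rewrite !inE eqxx.
  by move=> r; rewrite /reg_delta /= updE; do 2?case: eqP => /= ?; subst; lia.
- case=> <- <-; exists (Transition pc lJmp (minn t (size M)) ENone); split=> //.
    by apply: mem; rewrite inE.
  by move=> r; rewrite addr0.
Qed.

Definition tracks w j pc regs :=
  (forall q, tokens M w q j = (q == pc)%:Z) /\
  (forall r, reg_value M c w r j = (regs r)%:Z).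

Lemma tracks0 w : tracks w 0 0 (init_regs c).
Proof. by split=> [q|r]; rewrite /tokens /reg_value weighted0 addr0. Qed.

Lemma tracks_idle w j pc regs : ~~ has (letter_at w ^~ j.+1) instr_letters ->
  tracks w j pc regs -> tracks w j.+1 pc regs.
Proof.
move=> Hn [Ht Hr]; split=> [q|r].
  by rewrite /tokens weightedS sum_fires_idle // addr0; apply: Ht.
by rewrite /reg_value weightedS sum_fires_idle // addr0; apply: Hr.
Qed.

Lemma tracks_fire w j e regs regs' : e \in transitions M -> fires w e j.+1 ->
  tracks w j (src e) regs -> (forall r, (regs' r)%:Z = (regs r)%:Z + reg_delta r e) ->
  tracks w j.+1 (dst e) regs'.
Proof.
move=> He Hf [Ht Hr] Hregs; split=> [q|r]; last by rewrite (reg_value_fire r He Hf) Hr Hregs.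
by rewrite (tokens_fire q He Hf) Ht /addr_delta [dst e == q]eq_sym [src e == q]eq_sym addrC subrK.
Qed.

Lemma tracks_selfloop w j e pc regs : e \in transitions M -> fires w e j.+1 ->
  dst e = src e -> tracks w j pc regs -> tracks w j.+1 pc regs.
Proof.
move=> He Hf Hloop [Ht Hr]; have [q _ Hin] := mem_transitions He.
have [Hsrc _] := mem_instr_transitions Hin.
split=> [q'|r]; first by rewrite (tokens_fire q' He Hf) /addr_delta Hloop subrr addr0.
by rewrite (reg_value_fire r He Hf) (reg_delta_selfloop r Hin) ?addr0 -?Hsrc.
Qed.

(* A transition firing away from the token would leave a negative number of
   tokens on its source, unless it is a self-loop. *)
Lemma tracks_valid_step w j pc regs : valid_at M c w j.+1 -> tracks w j pc regs ->
  exists pc' regs', [/\ rm_reach M (pc, regs) (pc', regs'), tracks w j.+1 pc' regs' &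
    forall r, (regs' r <= (regs r).+1)%N].
Proof.
case/and3P=> Hletters Hregs Htok Htr.
have [Hl|Hn] := boolP (has (letter_at w ^~ j.+1) instr_letters); last first.
  by exists pc, regs; split=> //; [apply: rm_reach_refl | apply: tracks_idle].
move: Hletters; rewrite Hl /= => /hasP [e He /andP [Hf Hg]].
have [q Hq Hin] := mem_transitions He; have [Hsrc _] := mem_instr_transitions Hin.
have [Epc|Npc] := eqVneq (src e) pc; last first.
  have Hloop : dst e = src e.
    have : 0 <= tokens M w q j.+1 by apply: (allP Htok); rewrite mem_iota.
    rewrite (tokens_fire q He Hf) Htr.1 /addr_delta Hsrc eqxx -Hsrc (negbTE Npc).
    by case: eqP => // _; lia.
  by exists pc, regs; split=> //; [apply: rm_reach_refl | exact: tracks_selfloop He Hf Hloop Htr].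
subst pc; have [Ht Hr] := Htr.
have Hd r : eff e = EDec r -> (0 < regs r)%N.
  move=> Hr'; have := allP Hregs r (dec_reg_mem He Hr').
  by rewrite (reg_value_fire r He Hf) Hr /reg_delta Hr' eqxx; lia.
have Hz r : eff e = EZero r -> regs r = 0%N.
  move=> Hr'; move: Hg; rewrite /guard_ok Hr' (reg_value_fire r He Hf) Hr /reg_delta Hr'.
  by move=> /eqP; lia.
have [regs' Hs Hregs'] := step_of_transition He Hd Hz.
exists (dst e), regs'; split; first exact: rm_reach_step Hs (rm_reach_refl _ _).
  exact: tracks_fire.
by move=> r; have := Hregs' r; have := reg_delta_le1 r e; lia.
Qed.

(* Register [out] starts at [0] and grows by at most one per letter. *)
Theorem encodes_run_sound w out : out != 0%N -> encodes_run M c w ->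
  exists regs, rm_reach M (0%N, init_regs c) (size M, regs) /\ (regs out <= size w)%N.
Proof.
move=> Hout /andP [Hvalid Hfin].
have Hinv j : (j <= size w)%N -> exists pc regs,
    [/\ rm_reach M (0%N, init_regs c) (pc, regs), tracks w j pc regs & (regs out <= j)%N].
  elim: j => [_|j IH Hj].
    exists 0%N, (init_regs c); split; [exact: rm_reach_refl | exact: tracks0 |].
    by rewrite /init_regs (negbTE Hout).
  have [pc [regs [Hreach Htr Hle]]] := IH (ltnW Hj).
  have Hv : valid_at M c w j.+1 by apply: (allP Hvalid); rewrite mem_iota; lia.
  have [pc' [regs' [Hstep Htr' Hle']]] := tracks_valid_step Hv Htr.
  exists pc', regs'; split=> //; first exact: rm_reach_trans Hreach Hstep.
  by have := Hle' out; lia.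
have [pc [regs [Hreach [Ht _] Hle]]] := Hinv _ (leqnn _).
by move: Hfin; rewrite Ht; case: eqP => // -> _; exists regs.
Qed.

End Soundness.

(** * Halting runs are encoded by accepted words *)

Lemma instr_letter_shiftF a : a \in instr_letters -> (a == lUp) = false /\ (a == lDown) = false.
Proof. by rewrite !inE => /or4P [] /eqP ->. Qed.

Section Completeness.
Variables (M : seq instr) (c : nat).
Implicit Types (w : seq 'I_6) (e : transition) (regs : nat -> nat).

Lemma letter_at_rcons w a b j : (j <= size w)%N -> letter_at (rcons w a) b j = letter_at w b j.
Proof.
rewrite /letter_at map_rcons nth_rcons size_map.
by case: j => //= j Hj; rewrite Hj.
Qed.

Lemma letter_at_last w a b : letter_at (rcons w a) b (size w).+1 = (a == b).
Proof.
rewrite /letter_at map_rcons nth_rcons size_map ltnn eqxx /=.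
by apply/eqP/eqP => [[]|->].
Qed.

Lemma height_rcons w a j : (j <= size w)%N -> height (rcons w a) j = height w j.
Proof.
move=> Hj; rewrite /height; congr (_%:Z - _%:Z); apply: eq_in_count => i;
  by rewrite mem_iota => Hi; apply: letter_at_rcons; lia.
Qed.

Lemma height_last w a :
  height (rcons w a) (size w).+1 = height w (size w) + (a == lUp)%:Z - (a == lDown)%:Z.
Proof.
rewrite -(height_rcons a (leqnn _)) /height !count_iota1S !letter_at_last !PoszD.
by rewrite opprD addrACA addrA.
Qed.

Lemma weighted_rcons w a cf j :
  (j <= size w)%N -> weighted M (rcons w a) cf j = weighted M w cf j.
Proof.
move=> Hj; apply: eq_bigr => e _; congr (_ * _%:Z); apply: eq_in_count => i.
rewrite mem_iota => Hi; rewrite /fires letter_at_rcons ?height_rcons //; lia.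
Qed.

Lemma valid_at_rcons w a j : (j <= size w)%N -> valid_at M c (rcons w a) j = valid_at M c w j.
Proof.
move=> Hj; rewrite /valid_at.
have Hreg r : reg_value M c (rcons w a) r j = reg_value M c w r j.
  by rewrite /reg_value weighted_rcons.
have Htok q : tokens M (rcons w a) q j = tokens M w q j by rewrite /tokens weighted_rcons.
congr [&& ~~ _ || _, _ & _].
- by apply: eq_has => b; rewrite letter_at_rcons.
- apply: eq_has => e; rewrite /fires letter_at_rcons ?height_rcons // /guard_ok.
  by case: (eff e) => // r; rewrite Hreg.
- by apply: eq_all => r; rewrite Hreg.
- by apply: eq_all => q; rewrite Htok.
Qed.

Lemma tracks_rcons w a j pc regs :
  (j <= size w)%N -> tracks M c w j pc regs -> tracks M c (rcons w a) j pc regs.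
Proof.
by move=> Hj [Ht Hr]; split=> x; rewrite /tokens /reg_value weighted_rcons //; [apply: Ht | apply: Hr].
Qed.

Lemma valid_at_tracks w j pc regs : tracks M c w j pc regs ->
  ~~ has (letter_at w ^~ j) instr_letters
    || has (fun e => fires w e j && guard_ok M c w e j) (transitions M) ->
  valid_at M c w j.
Proof.
by move=> [Ht Hr] H; rewrite /valid_at H /=; apply/andP; split; apply/allP => x _; rewrite ?Ht ?Hr.
Qed.

Definition simulates w pc regs :=
  all (valid_at M c w) (iota 1 (size w)) /\ tracks M c w (size w) pc regs.

Lemma simulates_nil : simulates [::] 0 (init_regs c).
Proof. by split; last exact: tracks0. Qed.

Lemma simulates_rcons w a pc regs pc' regs' : simulates w pc regs ->
  tracks M c (rcons w a) (size w).+1 pc' regs' ->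
  ~~ has (letter_at (rcons w a) ^~ (size w).+1) instr_letters
    || has (fun e => fires (rcons w a) e (size w).+1 && guard_ok M c (rcons w a) e (size w).+1)
           (transitions M) ->
  simulates (rcons w a) pc' regs'.
Proof.
move=> [Hv _] Ht Hl; rewrite /simulates size_rcons iota1S all_rcons (valid_at_tracks Ht Hl).
split=> //; apply/allP => j; rewrite mem_iota => Hj.
by rewrite valid_at_rcons; [apply: (allP Hv); rewrite mem_iota | lia].
Qed.

Lemma simulates_shift w a pc regs : a \in [:: lUp; lDown] ->
  simulates w pc regs -> simulates (rcons w a) pc regs.
Proof.
move=> Ha Hsim; have Hn : ~~ has (letter_at (rcons w a) ^~ (size w).+1) instr_letters.
  by rewrite /= !letter_at_last; move: Ha; rewrite !inE => /orP [] /eqP ->.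
have Ht := tracks_idle Hn (tracks_rcons a (leqnn _) Hsim.2).
by apply: simulates_rcons Hsim Ht _; rewrite Hn.
Qed.

Lemma simulates_height w pc regs (h : int) : simulates w pc regs ->
  exists w', simulates w' pc regs /\ height w' (size w') = h.
Proof.
move=> Hsim; set h0 := height w (size w).
have up n : exists w', simulates w' pc regs /\ height w' (size w') = h0 + n%:Z.
  elim: n => [|n [w' [Hs Hh]]]; first by exists w; rewrite addr0.
  exists (rcons w' lUp); split; first exact: simulates_shift.
  by rewrite size_rcons height_last Hh /=; lia.
have down n : exists w', simulates w' pc regs /\ height w' (size w') = h0 - n%:Z.
  elim: n => [|n [w' [Hs Hh]]]; first by exists w; rewrite subr0.
  exists (rcons w' lDown); split; first exact: simulates_shift.
  by rewrite size_rcons height_last Hh /=; lia.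
case E: (h - h0) => [n|n].
  by have [w' [Hs Hh]] := up n; exists w'; split=> //; rewrite Hh -E addrC subrK.
by have [w' [Hs Hh]] := down n.+1; exists w'; split=> //; rewrite Hh; move: E; rewrite NegzE; lia.
Qed.

Lemma simulates_fire w e regs regs' : simulates w (src e) regs ->
  height w (size w) = (src e)%:Z -> e \in transitions M ->
  (forall r, eff e = EZero r -> regs r = 0%N) ->
  (forall r, (regs' r)%:Z = (regs r)%:Z + reg_delta r e) ->
  simulates (rcons w (label e)) (dst e) regs'.
Proof.
move=> Hsim Hh He Hz Hregs.
have [q _ /mem_instr_transitions [_ /instr_letter_shiftF [HU HD]]] := mem_transitions He.
have Hf : fires (rcons w (label e)) e (size w).+1.
  by rewrite /fires letter_at_last eqxx height_last Hh HU HD subr0 addr0 /=.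
have Ht := tracks_fire He Hf (tracks_rcons (label e) (leqnn _) Hsim.2) Hregs.
apply: (simulates_rcons Hsim Ht); apply/orP; right; apply/hasP; exists e => //.
rewrite Hf /guard_ok; case E: (eff e) => [r|r|r|] //.
by rewrite Ht.2 Hregs (Hz r E) /reg_delta E.
Qed.

Lemma simulates_step w pc regs pc' regs' : simulates w pc regs ->
  rm_step M (pc, regs) = Some (pc', regs') -> exists w', simulates w' pc' regs'.
Proof.
move=> Hsim /transition_of_step [e [He Hsrc Hdst Hregs Hz]]; subst pc pc'.
have [w2 [Hsim2 Hh2]] := simulates_height (src e)%:Z Hsim.
by exists (rcons w2 (label e)); apply: simulates_fire Hsim2 Hh2 He Hz Hregs.
Qed.

Lemma simulates_reach w cfg cfg' : rm_reach M cfg cfg' ->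
  simulates w cfg.1 cfg.2 -> exists w', simulates w' cfg'.1 cfg'.2.
Proof.
move=> H; elim: H w => [cfg0|[pc regs] [pc1 regs1] cfg2 Hstep _ IH] w Hs; first by exists w.
by have [w1 /IH] := simulates_step Hs Hstep.
Qed.

Theorem encodes_run_complete regs :
  rm_reach M (0%N, init_regs c) (size M, regs) -> exists w, encodes_run M c w.
Proof.
move=> /simulates_reach /(_ simulates_nil) [w [Hv [Ht _]]].
by exists w; rewrite /encodes_run Hv Ht eqxx.
Qed.

End Completeness.

Local Close Scope ring_scope.

(** * Size of the formula *)

Lemma int_size_init_regs c r :
  int_size (- (init_regs c r)%:Z) <= int_size (- (init_regs 0 r)%:Z) + int_size c%:Z.
Proof. by rewrite /int_size /init_regs; case: eqP => _; rewrite ?abszN /=; lia. Qed.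

Section FormulaSize.
Variables (M : seq instr) (c : nat).

Lemma fsize_fRegGe r : fsize (fRegGe M c r) <= fsize (fRegGe M 0 r) + int_size c%:Z.
Proof. exact: fsize_FCmp_le (int_size_init_regs c r). Qed.

Lemma fsize_fGuard e : fsize (fGuard M c e) <= fsize (fGuard M 0 e) + int_size c%:Z.
Proof.
rewrite /fGuard; case: (eff e) => [r|r|r|]; rewrite ?leq_addr //.
exact: fsize_FCmp_le (int_size_init_regs c r).
Qed.

Lemma fsize_run_formula : fsize (run_formula M c) <= fsize (run_formula M 0) +
  (size (transitions M) + size (machine_regs M)) * int_size c%:Z.
Proof.
set gc := FBigOr [seq FAnd (fFires e) (fGuard M c e) | e <- transitions M].
set g0 := FBigOr [seq FAnd (fFires e) (fGuard M 0 e) | e <- transitions M].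
set rc := FBigAnd [seq fRegGe M c r | r <- machine_regs M].
set r0 := FBigAnd [seq fRegGe M 0 r | r <- machine_regs M].
have Hg : fsize gc <= fsize g0 + size (transitions M) * int_size c%:Z.
  apply: fsize_FBigOr => e; have := fsize_fGuard e.
  by move: (fFires e) (fGuard M c e) (fGuard M 0 e) => f a b /=; lia.
have Hr : fsize rc <= fsize r0 + size (machine_regs M) * int_size c%:Z.
  exact: fsize_FBigAnd fsize_fRegGe.
rewrite /run_formula /fValid /FOr -/gc -/g0 -/rc -/r0.
move: (FBigOr _) (fTokensGe _ _ _) (FBigAnd [seq fTokensGe _ _ _ | _ <- _]) => L F Q /=.
move: Hg Hr; move: (fsize gc) (fsize g0) (fsize rc) (fsize r0) => x x0 y y0.
lia.
Qed.

End FormulaSize.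

Lemma int_size_exp2 k : int_size (2 ^ k)%N%:Z = k.+2.
Proof. by rewrite /int_size /= trunc_expnK. Qed.

Lemma linear_dominates_int_size A B : exists c, 3 <= c /\ A + B * int_size c%:Z <= c.
Proof.
set t := A + 2 * B + 4; exists (2 ^ (t + t)); rewrite int_size_exp2 expnD.
have Ht := ltn_expl t (isT : 1 < 2).
split; nia.
Qed.

Lemma accepts_run_formula M c w : accepts [:: run_formula M c] w = encodes_run M c w.
Proof. exact: eval_run_formula. Qed.

Lemma wf_run_formula M c : wf_prog [:: run_formula M c].
Proof. by apply/andP; split=> //; apply/andP; split=> //; apply: refs_ok_run_formula. Qed.

(* The final increment makes the output exceed [g c] for [p] computing [g]. *)
Definition prf_machine (p : prf) := compile 0 (CSeq (loop_of_prf p [:: 0] 1 2) (CInc 1)).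

Lemma prf_machine_halts p n m : prf_eval p [:: n] m ->
  exists2 regs, rm_reach (prf_machine p) (0, init_regs n) (size (prf_machine p), regs) &
    regs 1 = m.+1.
Proof.
move=> Hp; have [s Hexec [Hs _]] :=
  loop_of_prfP Hp (ins := [:: 0]) (out := 1) (b := 2) (s := init_regs n) erefl isT isT.
exists (upd s 1 (s 1).+1); last by rewrite upd_same Hs.
have := exec_compile (exec_seq Hexec (exec_inc 1 s)) (M := prf_machine p) (o := 0).
by rewrite add0n size_compile; apply; exists [::], [::]; rewrite cats0.
Qed.

Lemma encodes_run_length M c w regs : rm_reach M (0, init_regs c) (size M, regs) ->
  encodes_run M c w -> regs 1 <= size w.
Proof.
move=> Hrun /(encodes_run_sound (isT : 1 != 0)) [regs' [Hrun' Hle]].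
have Hhalt s : rm_step M (size M, s) = None by rewrite /rm_step ltnn.
by have [<-] := rm_reach_halted_uniq Hrun' Hrun (Hhalt _) (Hhalt _).
Qed.

Theorem corollary3p6 :
  exists k : nat,
    ~ exists g : nat -> nat,
        computable g /\ length_complexity_bounded_by 'I_k g.
Proof.
exists 6 => -[g [[p Hp] Hbound]]; set M := prf_machine p.
have [c [Hc3 Hc]] := linear_dominates_int_size (fsize (run_formula M 0))
  (size (transitions M) + size (machine_regs M)).
have [regs Hrun Hout] := prf_machine_halts (Hp c).
have [w0 Hw0] := encodes_run_complete Hrun.
have Hsize : prog_size [:: run_formula M c] <= c.
  by rewrite /prog_size /= addn0 (leq_trans (fsize_run_formula M c) Hc).
(* [Hc3] bounds [prog_size [:: FFalse] = 3]. *)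
have [w [Hlen /andP [Hacc _]]] := Hbound c _ [:: FFalse] (wf_run_formula M c) isT Hsize Hc3
  (ex_intro _ w0 (introT andP (conj (etrans (accepts_run_formula M c w0) Hw0) isT))).
have := encodes_run_length Hrun (etrans (esym (accepts_run_formula M c w)) Hacc).
by rewrite Hout => /leq_trans /(_ Hlen); rewrite ltnn.
Qed.
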